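(* For all integers $t\geq 1$ and $N\geq 0$: $\mathfrak{m}_{\mathrm{odd}}(-2,t;8N+r)\equiv 0\pmod 4$ for $r\in\{3,6\}$; $\mathfrak{m}_{\mathrm{odd}}(-2,t;9N+r)\equiv 0\pmod 4$ for $r\in\{3,6\}$; $\mathfrak{m}_{\mathrm{odd}}(-2,t;8N+7)\equiv 0\pmod 8$.
   Context: For $a\in\{-2,-1,0,1,2\}$ and integer $t\geq0$, the integers $\mathfrak{m}_{\mathrm{odd}}(a,t;n)$ are defined by $\sum_{n\geq0}\mathfrak{m}_{\mathrm{odd}}(a,t;n)q^n=\sum\prod_{k=1}^t\frac{q^{n_k}}{1+aq^{n_k}+q^{2n_k}}$, the sum running over all $t$-tuples of odd positive integers $n_1<n_2<\cdots<n_t$ (for $t=0$ the series is $1$). *)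

From mathcomp Require Import all_boot all_algebra.
Set Implicit Arguments. Unset Strict Implicit. Unset Printing Implicit Defensive.
Import GRing.Theory.
Local Open Scope ring_scope.

(* Coefficients of the formal power series 1/(1 + a x + x^2) over int:
   c_0 = 1, c_1 = -a, c_j = -a c_{j-1} - c_{j-2}.
   inv_pair a j = (c_j, c_{j+1}). *)
Fixpoint inv_pair (a : int) (j : nat) : int * int :=
  match j with
  | 0 => (1, - a)
  | j'.+1 => let (u, v) := inv_pair a j' in (v, - a * v - u)
  end.

Definition inv_coef (a : int) (j : nat) : int := (inv_pair a j).1.

(* q^n / (1 + a q^n + q^(2n)) = sum_{j>=0} c_j q^(n (j+1)),
   truncated to the terms with j <= M (enough to determine coefficients of q^k, k <= M). *)
Definition term_trunc (a : int) (n M : nat) : {poly int} :=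
  \sum_(j < M.+1) inv_coef a j *: 'X^(n * j.+1).

(* Admissible t-tuples: odd positive integers n_1 < ... < n_t (each <= M;
   larger n_k only contribute to powers q^k with k > M). *)
Definition odd_incr (t M : nat) (n : {ffun 'I_t -> 'I_M.+1}) : bool :=
  [forall i : 'I_t, odd (n i)] && [forall i : 'I_t, forall j : 'I_t, (i < j)%N ==> (n i < n j)%N].

(* m_odd(a,t;M) = coefficient of q^M in
   sum_{odd n_1<...<n_t} prod_k q^{n_k}/(1 + a q^{n_k} + q^{2 n_k}). *)
Definition m_odd (a : int) (t M : nat) : int :=
  (\sum_(n : {ffun 'I_t -> 'I_M.+1} | odd_incr n)
     \prod_(k < t) term_trunc a (n k) M)`_M.

From Pilot Require Import Defs.
From mathcomp Require Import all_boot all_algebra.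
From mathcomp Require Import ring zify.
Set Implicit Arguments. Unset Strict Implicit. Unset Printing Implicit Defensive.
Import GRing.Theory.
Local Open Scope ring_scope.

(* For a = -2 the summand is q^n / (1 - q^n)^2, so with an extra variable x
     sum_t m_odd(-2,t;.) x^t = prod_{n odd} ((1 - q^n)^2 + q^n x) / prod_{n odd} (1 - q^n)^2.
   For x = 2 - z - 1/z each factor of the numerator is (1 - z q^n)(1 - q^n / z), so the Jacobi
   triple product turns the numerator into (q^2;q^2)_oo^-1 sum_k (-1)^k z^k q^(k^2), and the
   denominator is the case z = 1.  As z^k + z^-k = V_k(x) is a polynomial in x with integer
   coefficients, this reads E(x) theta = Theta(x) with theta = 1 + 2 s,
   s = sum_(k >= 1) (-1)^k q^(k^2), and every x-coefficient of Theta is supported on squares.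
   Since theta (1 - 2 s) = 1 - 4 s^2 and theta (1 - 2 s + 4 s^2) = 1 + 8 s^3, modulo 4
   (resp. 8) m_odd(-2,t;M) is the coefficient of q^M in a series supported on sums of two
   (resp. three) squares, and such M are never 3, 6, 7 mod 8 or 3, 6 mod 9 (resp. 7 mod 8).
   All series are truncated modulo q^(M+1), and the triple product is used in the finite form
     prod_(j < n) ((1 - q^(2j+1))^2 + q^(2j+1) x) = sum_k d_(n,k) V_k(x)
   with d_(n,k) = (-1)^k q^(k^2) d_(n,0) modulo q^(2n). *)

Definition eqmod (A : comPzRingType) (m a b : A) := exists h, a - b = m * h.

Section EqMod.
Variables (A : comPzRingType) (m : A).

Lemma eqmod_refl a : eqmod m a a.
Proof. by exists 0; rewrite subrr mulr0. Qed.

Lemma eqmod_sym a b : eqmod m a b -> eqmod m b a.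
Proof. by case=> h e; exists (- h); rewrite mulrN -e opprB. Qed.

Lemma eqmod_trans a b c : eqmod m a b -> eqmod m b c -> eqmod m a c.
Proof. by case=> h1 e1 [h2 e2]; exists (h1 + h2); rewrite mulrDr -e1 -e2; ring. Qed.

Lemma eqmodD a b c d : eqmod m a b -> eqmod m c d -> eqmod m (a + c) (b + d).
Proof. by case=> h1 e1 [h2 e2]; exists (h1 + h2); rewrite mulrDr -e1 -e2; ring. Qed.

Lemma eqmodM a b c d : eqmod m a b -> eqmod m c d -> eqmod m (a * c) (b * d).
Proof.
case=> h1 e1 [h2 e2]; exists (a * h2 + h1 * d).
by rewrite mulrDr mulrCA -e2 mulrA -e1; ring.
Qed.

Lemma eqmod_sum (I : Type) (r : seq I) (P : pred I) (F G : I -> A) :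
  (forall i, P i -> eqmod m (F i) (G i)) ->
  eqmod m (\sum_(i <- r | P i) F i) (\sum_(i <- r | P i) G i).
Proof. by move=> FG; apply: big_ind2 => //; [apply: eqmod_refl | apply: eqmodD]. Qed.

Lemma eqmod_prod (I : Type) (r : seq I) (P : pred I) (F G : I -> A) :
  (forall i, P i -> eqmod m (F i) (G i)) ->
  eqmod m (\prod_(i <- r | P i) F i) (\prod_(i <- r | P i) G i).
Proof. by move=> FG; apply: big_ind2 => //; [apply: eqmod_refl | apply: eqmodM]. Qed.

Lemma eqmod_mulr k a b : eqmod (m * k) a b -> eqmod m a b.
Proof. by case=> h e; exists (k * h); rewrite e mulrA. Qed.

End EqMod.

Section EqModPoly.
Variable R : comNzRingType.

Lemma eqmodXn_leq n N (a b : {poly R}) : (n <= N)%N -> eqmod 'X^N a b -> eqmod 'X^n a b.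
Proof. by move=> nN; rewrite -(subnKC nN) exprD; apply: eqmod_mulr. Qed.

Lemma eqmodC (m a b : R) : eqmod m a b -> eqmod m%:P a%:P b%:P.
Proof. by case=> h e; exists h%:P; rewrite -polyCB e polyCM. Qed.

Lemma eqmodC_coef (m : R) (a b : {poly R}) i : eqmod m%:P a b -> eqmod m a`_i b`_i.
Proof. by case=> h e; exists h`_i; rewrite -coefB e coefCM. Qed.

Lemma eqmodXn0P N (p : {poly R}) : eqmod 'X^N p 0 <-> forall i, (i < N)%N -> p`_i = 0.
Proof.
split=> [[h /eqP] | p_low].
  by rewrite subr0 => /eqP -> i iN; rewrite coefXnM iN.
exists (drop_poly N p); rewrite subr0 -[LHS](poly_take_drop N) mulrC.
suff -> : take_poly N p = 0 by rewrite add0r.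
by apply/polyP => i; rewrite coef_take_poly coef0; case: ltnP => // /p_low.
Qed.

Lemma eqmodXn_coef N (a b : {poly R}) i : eqmod 'X^N a b -> (i < N)%N -> a`_i = b`_i.
Proof. by case=> h e iN; apply/eqP; rewrite -subr_eq0 -coefB e coefXnM iN. Qed.

Lemma eqmodXn_mul2l N (a p p' : {poly R}) :
  a`_0 = 1 -> eqmod 'X^N (a * p) (a * p') -> eqmod 'X^N p p'.
Proof.
move=> a0 [h e]; have /eqmodXn0P ap0 : eqmod 'X^N (a * (p - p')) 0.
  by exists h; rewrite subr0 mulrBr.
have /eqmodXn0P[h' e'] : forall i, (i < N)%N -> (p - p')`_i = 0.
  elim/ltn_ind => i IH iN; have := ap0 i iN.
  rewrite coefM big_ord_recl subn0 a0 mul1r big1 ?addr0 // => j _.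
  by have ltj := ltn_ord j; rewrite IH ?mulr0 //; rewrite lift0; lia.
by exists h'; rewrite subr0 in e'.
Qed.

Lemma eqmodCXn_leq n N (a b : {poly {poly R}}) :
  (n <= N)%N -> eqmod ('X^N)%:P a b -> eqmod ('X^n)%:P a b.
Proof. by move=> nN; rewrite -(subnKC nN) exprD polyCM; apply: eqmod_mulr. Qed.

End EqModPoly.

Definition is_square (i : nat) := exists a, i = (a ^ 2)%N.

Definition sumset (P Q : nat -> Prop) (i : nat) := exists j l, i = (j + l)%N /\ P j /\ Q l.

Section Support.
Variable R : comNzRingType.
Implicit Types (P Q : nat -> Prop) (p q : {poly R}).

Definition supported P p := forall i, p`_i != 0 -> P i.

Lemma supported_mono P Q p : (forall i, P i -> Q i) -> supported P p -> supported Q p.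
Proof. by move=> PQ p_P i /p_P /PQ. Qed.

Lemma supported1 P : P 0%N -> supported P 1.
Proof. by move=> P0 i; rewrite coef1; case: (i == 0)%N / eqP => [-> | _]; rewrite ?eqxx. Qed.

Lemma supportedD P p q : supported P p -> supported P q -> supported P (p + q).
Proof.
move=> p_P q_P i; rewrite coefD; have [-> | /p_P Pi _] // := eqVneq p`_i 0.
by rewrite add0r => /q_P.
Qed.

Lemma supportedN P p : supported P p -> supported P (- p).
Proof. by move=> p_P i; rewrite coefN oppr_eq0; apply: p_P. Qed.

Lemma supportedMn P p n : supported P p -> supported P (p *+ n).
Proof.
by move=> p_P i; rewrite coefMn => pn0; apply: p_P; apply: contraNneq pn0 => ->; rewrite mul0rn.
Qed.

Lemma supported_sum P (I : Type) (r : seq I) (Pr : pred I) (F : I -> {poly R}) :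
  (forall i, Pr i -> supported P (F i)) -> supported P (\sum_(i <- r | Pr i) F i).
Proof.
move=> F_P; apply: big_ind => //; last exact: supportedD.
by move=> i; rewrite coef0 eqxx.
Qed.

Lemma supportedM P Q p q : supported P p -> supported Q q -> supported (sumset P Q) (p * q).
Proof.
move=> p_P q_Q i; rewrite coefM.
have [/existsP[j pq_j] _ | /existsPn pq0] := boolP [exists j : 'I_i.+1, p`_j * q`_(i - j) != 0].
  exists j, (i - j)%N; split; first by rewrite subnKC // -ltnS.
  by split; [apply: p_P | apply: q_Q]; apply: contraNneq pq_j => ->; rewrite ?mul0r ?mulr0.
by rewrite big1 ?eqxx // => j _; apply/eqP; rewrite -[_ == 0]negbK pq0.
Qed.

Lemma supportedCXn P (c : R) k : P k -> supported P (c%:P * 'X^k).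
Proof.
by move=> Pk i; rewrite coefCM coefXn; case: (i == k) / eqP => [-> | _]; rewrite ?mulr0 ?eqxx.
Qed.

End Support.

Lemma sqr_mod8 a : (a ^ 2 %% 8 \in [:: 0; 1; 4])%N.
Proof.
rewrite -modnXm; have : (a %% 8 < 8)%N by rewrite ltn_pmod.
by move: (a %% 8)%N => r; do 8? case: r => [|r] //.
Qed.

Lemma sqr_mod9 a : (a ^ 2 %% 9 \in [:: 0; 1; 4; 7])%N.
Proof.
rewrite -modnXm; have : (a %% 9 < 9)%N by rewrite ltn_pmod.
by move: (a %% 9)%N => r; do 9? case: r => [|r] //.
Qed.

Lemma sum_two_squares_mod8 i :
  sumset is_square is_square i -> (i %% 8 \notin [:: 3; 6; 7])%N.
Proof.
case=> _ [_ [-> [[a ->] [b ->]]]]; rewrite -modnDm.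
by move: (sqr_mod8 a) (sqr_mod8 b); rewrite !inE => /or3P[]/eqP-> /or3P[]/eqP->.
Qed.

Lemma sum_two_squares_mod9 i :
  sumset is_square is_square i -> (i %% 9 \notin [:: 3; 6])%N.
Proof.
case=> _ [_ [-> [[a ->] [b ->]]]]; rewrite -modnDm.
by move: (sqr_mod9 a) (sqr_mod9 b); rewrite !inE => /or4P[]/eqP-> /or4P[]/eqP->.
Qed.

Lemma sum_three_squares_mod8 i :
  sumset is_square (sumset is_square is_square) i -> (i %% 8 != 7)%N.
Proof.
case=> _ [_ [-> [[a ->] [_ [_ [-> [[b ->] [c ->]]]]]]]]; rewrite -modnDm -(modnDm (b ^ 2)).
move: (sqr_mod8 a) (sqr_mod8 b) (sqr_mod8 c); rewrite !inE.
by move=> /or3P[]/eqP-> /or3P[]/eqP-> /or3P[]/eqP->.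
Qed.

Lemma inv_pair_m2 j : Defs.inv_pair (-2) j = (j.+1%:R, j.+2%:R).
Proof.
elim: j => [|j IH]; first by rewrite /= opprK.
by rewrite /= IH -[j.+3]addn1 -[j.+2]addn1 !natrD; congr pair; ring.
Qed.

Lemma exprXn_split (R : nzRingType) n k N :
  (N <= n * k)%N -> ('X^n ^+ k : {poly R}) = 'X^N * 'X^(n * k - N).
Proof. by move=> Nnk; rewrite -exprM -exprD subnKC. Qed.

Lemma term_trunc_m2E n M :
  term_trunc (-2) n M = \sum_(j < M.+1) j.+1%:R * 'X^n ^+ j.+1.
Proof.
apply: eq_bigr => j _.
by rewrite /inv_coef inv_pair_m2 -exprM mulnC scaler_nat mulr_natl.
Qed.

Lemma sub1_sqr_mul_sum_nat (R : comNzRingType) (z : R) m :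
  (1 - z) ^+ 2 * \sum_(j < m) j.+1%:R * z ^+ j.+1
  = z - m.+1%:R * z ^+ m.+1 + m%:R * z ^+ m.+2.
Proof.
elim: m => [|m IH]; first by rewrite big_ord0 mulr0 mul1r expr1 mul0r addr0 subrr.
by rewrite big_ord_recr mulrDr IH /= !exprSr -[m.+2]addn1 -[m.+1]addn1 !natrD; ring.
Qed.

Lemma term_trunc_m2_eqmod M n : (0 < n)%N ->
  eqmod 'X^(M.+1) ((1 - 'X^n) ^+ 2 * term_trunc (-2) n M) 'X^n.
Proof.
move=> n_gt0; rewrite term_trunc_m2E sub1_sqr_mul_sum_nat [_ ^+ M.+3]exprS.
rewrite (@exprXn_split _ n M.+2 M.+1); last by nia.
by exists ('X^(n * M.+2 - M.+1) * (M.+1%:R * 'X^n - M.+2%:R)); ring.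
Qed.

Lemma term_trunc_m2_eqmod0 M n : (M < n)%N -> eqmod 'X^(M.+1) (term_trunc (-2) n M) 0.
Proof.
move=> Mn; rewrite term_trunc_m2E.
exists (\sum_(j < M.+1) j.+1%:R * 'X^(n * j.+1 - M.+1)).
rewrite subr0 mulr_sumr; apply: eq_bigr => j _.
by rewrite (@exprXn_split _ n j.+1 M.+1); [ring | nia].
Qed.

Lemma enum_ord_sorted (m : nat) : sorted (fun a b : 'I_m => (a < b)%N) (enum 'I_m).
Proof. by have := iota_ltn_sorted 0 m; rewrite -val_enum_ord sorted_map. Qed.

Section IncreasingFunctions.
Variables t L : nat.
Implicit Types n : {ffun 'I_t -> 'I_L}.

Definition increasing n := [forall i : 'I_t, forall j : 'I_t, (i < j)%N ==> (n i < n j)%N].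

Let ltn_ord_trans : transitive (fun a b : 'I_L => (a < b)%N).
Proof. by move=> a b c; apply: ltn_trans. Qed.

Lemma increasing_sorted n : increasing n ->
  sorted (fun a b : 'I_L => (a < b)%N) (map n (enum 'I_t)).
Proof.
move=> /forallP n_incr; rewrite sorted_map; apply: sub_sorted (enum_ord_sorted t).
by move=> a b ab; have /forallP/(_ b)/implyP := n_incr a; apply.
Qed.

Lemma increasing_inj n : increasing n -> injective n.
Proof.
move=> /forallP n_incr a b nab; apply/val_inj/eqP; case: ltngtP => // ab.
  by have /forallP/(_ b)/implyP/(_ ab) := n_incr a; rewrite nab ltnn.
by have /forallP/(_ a)/implyP/(_ ab) := n_incr b; rewrite nab ltnn.
Qed.

Lemma increasing_imset_inj n n' : increasing n -> increasing n' ->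
  [set n k | k : 'I_t] = [set n' k | k : 'I_t] -> n = n'.
Proof.
move=> n_incr n'_incr nn'.
have mem_map n1 : map n1 (enum 'I_t) =i [set n1 k | k : 'I_t].
  by move=> x; apply/mapP/imsetP => -[k _ ->]; exists k; rewrite ?mem_enum.
have : map n (enum 'I_t) = map n' (enum 'I_t).
  apply: (irr_sorted_eq ltn_ord_trans (fun a => ltnn _));
    by [apply: increasing_sorted | move=> x; rewrite !mem_map nn'].
move=> nn'_seq; apply/ffunP => k.
have : nth (n k) (map n (enum 'I_t)) k = nth (n k) (map n' (enum 'I_t)) k by rewrite nn'_seq.
by rewrite !(nth_map k) -?enumT ?size_enum_ord // nth_ord_enum.
Qed.

End IncreasingFunctions.

Lemma odd_incrE t M (n : {ffun 'I_t -> 'I_M.+1}) :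
  odd_incr n = [forall i, odd (n i)] && increasing n.
Proof. by []. Qed.

Lemma enum_set_sorted L (J : {set 'I_L}) : sorted (fun a b : 'I_L => (a < b)%N) (enum J).
Proof.
rewrite /enum_mem -enumT; apply: sorted_filter; last exact: enum_ord_sorted.
by move=> a b c; apply: ltn_trans.
Qed.

Lemma imset_odd_incr t M (J : {set 'I_M.+1}) :
  (J \in [set [set n k | k : 'I_t] | n : {ffun 'I_t -> 'I_M.+1} in [set n | odd_incr n]])
  = (#|J| == t) && [forall i in J, odd i].
Proof.
apply/imsetP/andP => [[n] | [/eqP cardJ /forall_inP J_odd]].
  rewrite inE odd_incrE => /andP[/forallP n_odd n_incr] ->; split.
    by rewrite card_imset ?card_ord //; apply: increasing_inj.
  by apply/forall_inP => _ /imsetP[k _ ->]; apply: n_odd.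
have size_J : size (enum J) = t by rewrite -cardJ cardE.
exists [ffun k : 'I_t => nth ord0 (enum J) k].
  rewrite inE odd_incrE; apply/andP; split.
    by apply/forallP => k; rewrite ffunE; apply: J_odd; rewrite -mem_enum mem_nth ?size_J.
  apply/forallP => a; apply/forallP => b; apply/implyP => ab; rewrite !ffunE.
  by apply: (sorted_ltn_nth _ ord0 (enum_set_sorted J)); rewrite ?inE ?size_J //; apply: ltn_trans.
apply/setP => x; apply/idP/imsetP => [xJ | [k _ ->]].
  have x_idx : (index x (enum J) < t)%N by rewrite -size_J index_mem mem_enum.
  by exists (Ordinal x_idx); rewrite // ffunE nth_index ?mem_enum.
by rewrite ffunE -mem_enum mem_nth ?size_J.
Qed.

Lemma sum_odd_incr (R : comNzRingType) t M (c : nat -> R) :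
  \sum_(n : {ffun 'I_t -> 'I_M.+1} | odd_incr n) \prod_(k < t) c (n k)
  = \sum_(J : {set 'I_M.+1} | #|J| == t) \prod_(i in J) (if odd i then c i else 0).
Proof.
rewrite (bigID (fun J : {set 'I_M.+1} => [forall i in J, odd i])) /=.
rewrite [X in _ = _ + X]big1 ?addr0 => [|J /andP[_ /forall_inPn[i iJ i_even]]]; last first.
  by rewrite (bigD1 i) //= (negbTE i_even) mul0r.
transitivity (\sum_(J in [set [set n k | k : 'I_t]
                       | n : {ffun 'I_t -> 'I_M.+1} in [set n | odd_incr n]])
                 \prod_(i in J) (if odd i then c i else 0)); last first.
  by apply: eq_bigl => J; rewrite imset_odd_incr.
rewrite big_imset /=; last first.
  move=> n n'; rewrite !inE !odd_incrE => /andP[_ n_incr] /andP[_ n'_incr].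
  exact: increasing_imset_inj.
apply: eq_big => [n | n]; first by rewrite inE.
rewrite odd_incrE => /andP[/forallP n_odd n_incr].
rewrite big_imset /=; last by move=> a b _ _; apply: increasing_inj.
by apply: eq_big => [k | k _]; rewrite ?n_odd.
Qed.

Lemma coef_prod_odd_1DXC (R : comNzRingType) L (c : nat -> R) t :
  (\prod_(i < L | odd i) (1 + (c i)%:P * 'X))`_t
  = \sum_(J : {set 'I_L} | #|J| == t) \prod_(i in J) (if odd i then c i else 0).
Proof.
rewrite big_mkcond (eq_bigr (fun i : 'I_L => (if odd i then c i else 0)%:P * 'X + 1)).
  rewrite bigA_distr coef_sum [RHS]big_mkcond; apply: eq_bigr => J _.
  rewrite -big_mkcond prodrMr -rmorph_prod coefCM coefXn eq_sym.
  by case: (#|J| == t); rewrite ?mulr1 ?mulr0.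
by move=> i _; case: (odd i); rewrite ?mul0r ?add0r // addrC.
Qed.

Definition m_odd_gf (a : int) (L M : nat) : {poly {poly int}} :=
  \prod_(i < L | odd i) (1 + (term_trunc a i M)%:P * 'X).

Lemma m_odd_gfE a t M : m_odd a t M = ((m_odd_gf a M.+1 M)`_t)`_M.
Proof.
by rewrite /m_odd (sum_odd_incr _ _ (term_trunc a ^~ M)) -(coef_prod_odd_1DXC _ (term_trunc a ^~ M)).
Qed.

(* Evaluated at x = 2 - z - 1/z, [chebV k] is z^k + z^-k, so [cheb_comb B D] stands for the
   Laurent polynomial sum_(|k| < B) D_|k| z^k, and [cheb_mulX D] lists the coefficients of its
   product by x; [refl_pred] reflects the index -1 to 1. *)
Definition refl_pred (k : nat) : nat := if k is k'.+1 then k' else 1.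

Section ChebyshevV.
Variable S : comNzRingType.
Implicit Types (D E : nat -> S) (B k : nat).

Fixpoint chebV k : {poly S} :=
  match k with
  | 0 => 2%:R
  | 1 => 2%:R - 'X
  | (k'.+1 as k1).+1 => (2%:R - 'X) * chebV k1 - chebV k'
  end.

Lemma chebV0 : chebV 0 = 2%:R.
Proof. by []. Qed.

Lemma chebV1 : chebV 1 = 2%:R - 'X.
Proof. by []. Qed.

Lemma chebVSS k : chebV k.+2 = (2%:R - 'X) * chebV k.+1 - chebV k.
Proof. by []. Qed.

Arguments chebV : simpl never.

Lemma chebV_mulX k : (0 < k)%N -> chebV k * 'X = 2%:R * chebV k - chebV k.+1 - chebV k.-1.
Proof. by case: k => // k _; rewrite chebVSS /=; ring. Qed.

Lemma chebV_coef0 k : (chebV k)`_0 = 2%:R.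
Proof.
rewrite -horner_coef0; suff : (chebV k).[0] = 2%:R /\ (chebV k.+1).[0] = 2%:R by case.
elim: k => [|k [IHk IHk1]]; first by rewrite chebV0 chebV1 !hornerE subr0.
by split=> //; rewrite chebVSS !hornerE IHk IHk1 subr0; ring.
Qed.

Definition cheb_comb B D : {poly S} := (D 0%N)%:P + \sum_(1 <= k < B) (D k)%:P * chebV k.

Definition cheb_mulX D k : S := 2%:R * D k - D (refl_pred k) - D k.+1.

Lemma cheb_combD B D E :
  cheb_comb B (fun k => D k + E k) = cheb_comb B D + cheb_comb B E.
Proof.
rewrite /cheb_comb polyCD (eq_bigr (fun k => (D k)%:P * chebV k + (E k)%:P * chebV k)).
  by rewrite big_split /=; ring.
by move=> k _; rewrite polyCD mulrDl.
Qed.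

Lemma cheb_combMl c B D : cheb_comb B (fun k => c * D k) = c%:P * cheb_comb B D.
Proof.
rewrite /cheb_comb polyCM mulrDr mulr_sumr; congr (_ + _).
by apply: eq_bigr => k _; rewrite polyCM mulrA.
Qed.

Lemma cheb_comb_mulX B D : (forall k, (B < k)%N -> D k = 0) ->
  cheb_comb B.+2 D * 'X = cheb_comb B.+2 (cheb_mulX D).
Proof.
move=> D_eq0.
have shiftl : \sum_(1 <= k < B.+2) (D k)%:P * chebV k.+1
    = \sum_(1 <= k < B.+2) (D k.-1)%:P * chebV k - (D 0%N)%:P * chebV 1.
  rewrite big_nat_recr //= D_eq0 // mul0r addr0 [in RHS]big_nat_recl //=.
  by rewrite addrAC subrr add0r.
have shiftr : \sum_(1 <= k < B.+2) (D k)%:P * chebV k.-1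
    = \sum_(1 <= k < B.+2) (D k.+1)%:P * chebV k + 2%:R * (D 1%N)%:P.
  rewrite [in RHS]big_nat_recr //= D_eq0 // mul0r addr0 big_nat_recl //=.
  by rewrite addrC mulrC.
rewrite /cheb_comb /cheb_mulX mulrDl mulr_suml.
rewrite (eq_big_nat _ _ (F2 := fun k => 2%:R * ((D k)%:P * chebV k)
    - (D k)%:P * chebV k.+1 - (D k)%:P * chebV k.-1)); last first.
  by move=> k /andP[k_gt0 _]; rewrite -mulrA chebV_mulX //; ring.
rewrite [in RHS](eq_big_nat _ _ (F2 := fun k => 2%:R * ((D k)%:P * chebV k)
    - (D k.-1)%:P * chebV k - (D k.+1)%:P * chebV k)); last first.
  by move=> k /andP[]; case: k => //= k _ _; rewrite !polyCB polyCM polyC_natr; ring.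
rewrite !sumrB -!mulr_sumr shiftl shiftr chebV1 /= !polyCB polyCM polyC_natr; ring.
Qed.

Lemma cheb_comb_coef0 B D : (cheb_comb B D)`_0 = D 0%N + 2%:R * \sum_(1 <= k < B) D k.
Proof.
rewrite /cheb_comb coefD coefC /= coef_sum mulr_sumr; congr (_ + _).
by apply: eq_bigr => k _; rewrite coefCM chebV_coef0 mulrC.
Qed.

Lemma eqmod_cheb_comb m B D E : (forall k, eqmod m (D k) (E k)) ->
  eqmod m%:P (cheb_comb B D) (cheb_comb B E).
Proof.
move=> DE; apply: eqmodD; first exact: eqmodC.
by apply: eqmod_sum => k _; apply: eqmodM; [apply: eqmodC | apply: eqmod_refl].
Qed.

End ChebyshevV.

Arguments chebV {S} k : simpl never.

Lemma map_chebV (S T : comNzRingType) (f : {rmorphism S -> T}) k :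
  map_poly f (chebV k) = chebV k.
Proof.
suff : map_poly f (chebV k) = chebV k /\ map_poly f (chebV k.+1) = chebV k.+1 by case.
elim: k => [|k [IHk IHk1]].
  by rewrite chebV0 chebV1 rmorphB /= map_polyX !rmorph_nat.
by split=> //; rewrite chebVSS rmorphB rmorphM rmorphB /= map_polyX rmorph_nat IHk IHk1.
Qed.

Local Ltac split_Xpowers := rewrite !(mulnDr, mulnS, muln0, addn0, add0n, exprD, expr1).

Section FiniteJacobiTripleProduct.
Variable R : comNzRingType.

Fixpoint jtp_coef (n : nat) : nat -> {poly R} :=
  match n with
  | 0 => fun k => (k == 0%N)%:R
  | n'.+1 => fun k =>
      (1 - 'X^(2 * n' + 1)) ^+ 2 * jtp_coef n' k
      + 'X^(2 * n' + 1) * cheb_mulX (jtp_coef n') k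
  end.

Definition jacobi_prod (n : nat) : {poly {poly R}} :=
  \prod_(j < n) (((1 - 'X^(2 * j + 1)) ^+ 2)%:P + ('X^(2 * j + 1))%:P * 'X).

Lemma jtp_coef_eq0 n k : (n < k)%N -> jtp_coef n k = 0.
Proof.
elim: n k => [|n IH] k nk /=; first by case: k nk.
have nk' : (n < refl_pred k)%N by case: k nk => [|[|k]] //=; lia.
by rewrite /cheb_mulX !IH ?(mulr0, subrr, addr0, add0r) //; lia.
Qed.

Lemma jtp_coef_coef0 n k : (jtp_coef n k)`_0 = (k == 0%N)%:R.
Proof.
elim: n k => [|n IH] k; first by rewrite /= -polyC_natr coefC.
rewrite -horner_coef0 /= /cheb_mulX !hornerE !horner_coef0 !IH addn1 expr0n /=; ring.
Qed.

Lemma jacobi_prodE n B : (n < B)%N -> jacobi_prod n = cheb_comb B (jtp_coef n).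
Proof.
elim: n B => [|n IH] B nB.
  rewrite /jacobi_prod big_ord0 /cheb_comb big_nat_cond big1 ?addr0 => [|[|k] //].
    by rewrite /= polyC_natr.
  by rewrite /= mul0r.
case: B nB => [|[|B]] // nB.
rewrite /jacobi_prod big_ord_recr /= -/(jacobi_prod n) (IH B.+2) 1?ltnW //.
rewrite mulrDr [_%:P * 'X]mulrC mulrA cheb_comb_mulX; last first.
  by move=> k Bk; rewrite jtp_coef_eq0 //; lia.
by rewrite ![cheb_comb _ _ * _]mulrC -!cheb_combMl -cheb_combD.
Qed.

(* [jtp_coef n k] is (-1)^k q^(k^2) times the Gaussian binomial [2n, n+k] in q^2, and this is
   the ratio of two consecutive Gaussian binomials. *)
Lemma jtp_coef_recurrence n j :
  (1 - 'X^(2 * (n + j.+1))) * jtp_coef n j.+1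
  + ('X^(2 * j + 1) - 'X^(2 * n + 1)) * jtp_coef n j = 0.
Proof.
pose rel n j := (1 - 'X^(2 * (n + j.+1))) * jtp_coef n j.+1
                + ('X^(2 * j + 1) - 'X^(2 * n + 1)) * jtp_coef n j.
rewrite -/(rel n j); elim: n j => [|n IH] j; first by case: j => [|j]; rewrite /rel /=; ring.
pose y := 'X^(2 * n) : {poly R}.
case: j => [|j].
  transitivity ((1 + y ^+ 2 * 'X^4 - y * 'X^2) * rel n 0%N - y * 'X * rel n 1%N); last first.
    by rewrite !IH; ring.
  rewrite /rel /y /= /cheb_mulX /=; split_Xpowers; ring.
transitivity (- y * 'X^3 * rel n j + (1 + y ^+ 2 * 'X^4) * rel n j.+1 - y * 'X * rel n j.+2).
  rewrite /rel /y /= /cheb_mulX /=; split_Xpowers; ring.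
by rewrite !IH; ring.
Qed.

Lemma jtp_coef_step n j :
  eqmod 'X^(2 * n) (jtp_coef n j.+1) (- 'X^(2 * j + 1) * jtp_coef n j).
Proof.
exists ('X^(2 * j.+1) * jtp_coef n j.+1 + 'X * jtp_coef n j).
apply/eqP; rewrite -subr_eq0 -(jtp_coef_recurrence n j); apply/eqP.
split_Xpowers; ring.
Qed.

Definition theta_coef (k : nat) : {poly R} := (-1) ^+ k * 'X^(k ^ 2).

Lemma jtp_coef_eqmod n k : eqmod 'X^(2 * n) (jtp_coef n k) (theta_coef k * jtp_coef n 0).
Proof.
rewrite /theta_coef; elim: k => [|k IH]; first by rewrite !expr0 !mul1r; apply: eqmod_refl.
apply: eqmod_trans (jtp_coef_step n k) _.
have -> : (k.+1 ^ 2 = 2 * k + 1 + k ^ 2)%N by rewrite !expnS expn0; nia.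
have regroup (a b c d : {poly R}) : (-1 * a) * (b * c) * d = - b * (a * c * d) by ring.
by rewrite exprS (exprD _ (2 * k + 1)) regroup; apply: eqmodM => //; apply: eqmod_refl.
Qed.

Lemma jacobi_prod_eqmod n :
  eqmod ('X^(2 * n))%:P (jacobi_prod n) ((jtp_coef n 0)%:P * cheb_comb n.+1 theta_coef).
Proof.
rewrite (jacobi_prodE (ltnSn n)) -cheb_combMl.
by apply: eqmod_cheb_comb => k; rewrite mulrC; apply: jtp_coef_eqmod.
Qed.

Lemma jacobi_prod_coef0 n : (jacobi_prod n)`_0 = \prod_(j < n) (1 - 'X^(2 * j + 1)) ^+ 2.
Proof. by rewrite -horner_coef0 horner_prod; apply: eq_bigr => j _; rewrite !hornerE. Qed.

End FiniteJacobiTripleProduct.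

Lemma big_ord_odd (T : Type) (idx : T) (op : Monoid.law idx) n (F : nat -> T) :
  \big[op/idx]_(i < 2 * n | odd i) F i = \big[op/idx]_(j < n) F (2 * j + 1)%N.
Proof.
rewrite big_mkcond /=; elim: n => [|n IH]; first by rewrite !big_ord0.
rewrite (_ : 2 * n.+1 = (2 * n).+2)%N ?mulnS // !big_ord_recr /= IH oddM /=.
by rewrite Monoid.mulm1 addn1.
Qed.

Lemma m_odd_gf_m2_stable M L : (M < L)%N ->
  eqmod ('X^(M.+1))%:P (m_odd_gf (-2) L M) (m_odd_gf (-2) M.+1 M).
Proof.
move=> ML; rewrite /m_odd_gf.
rewrite -!(big_mkord (fun i => odd i) (fun i => 1 + (term_trunc (-2) i M)%:P * 'X)).
rewrite (big_cat_nat _ (n := M.+1)) //=.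
rewrite -[X in eqmod _ _ X]mulr1; apply: eqmodM; first exact: eqmod_refl.
rewrite [X in eqmod _ _ X](_ : _ = \prod_(M.+1 <= i < L | odd i) 1); last by rewrite big1.
rewrite big_nat_cond [X in eqmod _ _ X]big_nat_cond.
apply: eqmod_prod => i /andP[/andP[Mi _] _].
have [h e] := term_trunc_m2_eqmod0 Mi; rewrite subr0 in e.
by exists (h%:P * 'X); rewrite addrAC subrr add0r e polyCM mulrA.
Qed.

Lemma m_odd_gf_m2_mul_den M L :
  eqmod ('X^(M.+1))%:P (m_odd_gf (-2) L M * (\prod_(i < L | odd i) (1 - 'X^i) ^+ 2)%:P)
    (\prod_(i < L | odd i) (((1 - 'X^i) ^+ 2)%:P + ('X^i)%:P * 'X)).
Proof.
rewrite rmorph_prod -big_split; apply: eqmod_prod => i i_odd.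
have [h e] := term_trunc_m2_eqmod M (odd_gt0 i_odd).
exists (h%:P * 'X); rewrite mulrA -polyCM -e /= !(rmorphB, rmorphM, rmorphXn, rmorph1) /=; ring.
Qed.

Local Notation Theta B := (cheb_comb B (theta_coef int)).
Local Notation sigma B := (\sum_(1 <= k < B) theta_coef int k).

Lemma m_odd_gf_theta_eqmod M t :
  eqmod 'X^(M.+1) ((m_odd_gf (-2) M.+1 M)`_t * (Theta M.+2)`_0) (Theta M.+2)`_t.
Proof.
set n := M.+1; set d := jtp_coef int n 0.
have leMn : (M.+1 <= 2 * n)%N by rewrite /n; lia.
have jac := eqmodCXn_leq leMn (jacobi_prod_eqmod int n).
have den : eqmod 'X^(M.+1) (\prod_(j < n) (1 - 'X^(2 * j + 1)) ^+ 2) (d * (Theta n.+1)`_0).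
  have := eqmodC_coef 0 (jacobi_prod_eqmod int n); rewrite jacobi_prod_coef0 coefCM.
  exact: eqmodXn_leq.
have gf : eqmod ('X^(M.+1))%:P (m_odd_gf (-2) n M * (d * (Theta n.+1)`_0)%:P) (d%:P * Theta n.+1).
  apply: eqmod_trans jac.
  have := m_odd_gf_m2_mul_den M (2 * n).
  rewrite (big_ord_odd _ _ (fun i => (1 - 'X^i) ^+ 2)).
  rewrite (big_ord_odd _ _ (fun i => ((1 - 'X^i) ^+ 2)%:P + ('X^i)%:P * 'X)) -/(jacobi_prod int n).
  apply: eqmod_trans; apply: eqmodM; last exact: eqmodC (eqmod_sym den).
  by apply/eqmod_sym/m_odd_gf_m2_stable; rewrite /n; lia.
have := eqmodC_coef t gf; rewrite coefMC coefCM mulrCA.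
by apply: eqmodXn_mul2l; rewrite jtp_coef_coef0.
Qed.

Lemma supported_theta_coefM k (c : int) : supported is_square (theta_coef int k * c%:P).
Proof.
have -> : theta_coef int k * c%:P = ((-1) ^+ k * c)%:P * 'X^(k ^ 2).
  by rewrite /theta_coef polyCM rmorphXn rmorphN1; ring.
by apply: supportedCXn; exists k.
Qed.

Lemma supported_Theta B t : supported is_square (Theta B)`_t.
Proof.
rewrite /cheb_comb coefD coefC coef_sum; apply: supportedD.
  case: (t == 0)%N; first by rewrite -[theta_coef _ _]mulr1; apply: supported_theta_coefM.
  by move=> i; rewrite coef0 eqxx.
apply: supported_sum => k _.
by rewrite coefCM -(map_chebV polyC) coef_map; apply: supported_theta_coefM.
Qed.

Lemma Theta_coef0 B : (Theta B)`_0 = 1 + sigma B *+ 2.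
Proof. by rewrite cheb_comb_coef0 mulr_natl /theta_coef !expr0 mul1r. Qed.

Lemma m_odd_m2_split t M (u : {poly int}) :
  m_odd (-2) t M = ((Theta M.+2)`_t * u)`_M
                   + ((m_odd_gf (-2) M.+1 M)`_t * (1 - (Theta M.+2)`_0 * u))`_M.
Proof.
rewrite m_odd_gfE -coefD; apply: eqmodXn_coef (ltnSn M).
set e := (m_odd_gf (-2) M.+1 M)`_t; set theta := (Theta M.+2)`_0.
rewrite {1}(_ : e = e * theta * u + e * (1 - theta * u)); last by ring.
apply: eqmodD; last exact: eqmod_refl.
by apply: eqmodM; [apply: m_odd_gf_theta_eqmod | apply: eqmod_refl].
Qed.

Lemma dvdz_mulrn (x : int) n : (n%:Z %| x *+ n)%Z.
Proof. by rewrite -mulr_natr natz dvdz_mull. Qed.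

Lemma supported_theta_sum B : supported is_square (sigma B).
Proof.
by apply: supported_sum => k _; rewrite -[theta_coef _ _]mulr1; apply: supported_theta_coefM.
Qed.

Lemma coef_ThetaM_eq0 P t M (u : {poly int}) :
  supported P u -> ~ sumset is_square P M -> ((Theta M.+2)`_t * u)`_M = 0.
Proof.
move=> u_P M_notin; apply/eqP; rewrite -[_ == 0]negbK; apply/negP.
by move=> /(supportedM (@supported_Theta M.+2 t) u_P).
Qed.

Lemma m_odd_m2_dvd4 t M : ~ sumset is_square is_square M -> (4 %| m_odd (-2) t M)%Z.
Proof.
move=> M_notin; rewrite (m_odd_m2_split t M (1 - sigma M.+2 *+ 2)) Theta_coef0.
rewrite (coef_ThetaM_eq0 _ _ M_notin); last first.
  apply: supportedD; first by apply: supported1; exists 0%N.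
  by apply: supportedN; apply: supportedMn; apply: supported_theta_sum.
have -> : 1 - (1 + sigma M.+2 *+ 2) * (1 - sigma M.+2 *+ 2) = (sigma M.+2 ^+ 2) *+ 4 by ring.
by rewrite add0r mulrnAr coefMn dvdz_mulrn.
Qed.

Lemma m_odd_m2_dvd8 t M :
  ~ sumset is_square (sumset is_square is_square) M -> (8 %| m_odd (-2) t M)%Z.
Proof.
move=> M_notin; rewrite (m_odd_m2_split t M (1 - sigma M.+2 *+ 2 + (sigma M.+2 ^+ 2) *+ 4)).
rewrite Theta_coef0 (coef_ThetaM_eq0 _ _ M_notin); last first.
  have sq_sum2 i : is_square i -> sumset is_square is_square i.
    by move=> i_sq; exists i, 0%N; split; [rewrite addn0 | split=> //; exists 0%N].
  have s_sum2 := supported_mono sq_sum2 (@supported_theta_sum M.+2).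
  apply: supportedD; last by apply: supportedMn; apply: supportedM; apply: supported_theta_sum.
  apply: supportedD; first by apply: supported1; exists 0%N, 0%N; split=> //; split; exists 0%N.
  by apply: supportedN; apply: supportedMn.
have -> : 1 - (1 + sigma M.+2 *+ 2) * (1 - sigma M.+2 *+ 2 + (sigma M.+2 ^+ 2) *+ 4)
          = - (sigma M.+2 ^+ 3 *+ 8) by ring.
by rewrite add0r mulrN coefN rpredN mulrnAr coefMn dvdz_mulrn.
Qed.

Theorem mainTheorem12 (t N : nat) : (1 <= t)%N ->
  [/\ (forall r : nat, r \in [:: 3; 6]%N -> (4 %| m_odd (-2) t (8 * N + r))%Z),
      (forall r : nat, r \in [:: 3; 6]%N -> (4 %| m_odd (-2) t (9 * N + r))%Z)
    & (8 %| m_odd (-2) t (8 * N + 7))%Z].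
Proof.
(* The congruences hold for t = 0 as well, where m_odd(-2,0;M) = 0 for M > 0. *)
move=> _; split.
- move=> r r36; apply: m_odd_m2_dvd4 => /sum_two_squares_mod8.
  by rewrite mulnC modnMDl; move: r36; rewrite !inE => /orP[]/eqP->.
- move=> r r36; apply: m_odd_m2_dvd4 => /sum_two_squares_mod9.
  by rewrite mulnC modnMDl; move: r36; rewrite !inE => /orP[]/eqP->.
- by apply: m_odd_m2_dvd8 => /sum_three_squares_mod8; rewrite mulnC modnMDl.
Qed.
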